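(* Let $L$ be a $2$-locally-differing $k$-dimensional $l$-assignment on a simplicial complex $X$, and let $\sigma_1,\sigma_2\in X(k)$ with $|\sigma_1\cap\sigma_2|=|\sigma_1|-1$. Then there is at most one permutation $\pi$ of $[l]$ such that $L^{\sigma_1}_i(v)=L^{\sigma_2}_{\pi(i)}(v)$ for every $v\in\sigma_1\cap\sigma_2$ and every $i\in[l]$.
   Context: $X(k)$ = faces with $k+1$ elements. A $k$-dimensional $l$-assignment is $L=(L^\sigma_i)_{\sigma\in X(k),i\in[l]}$ with $L^\sigma_i:\sigma\to\{0,1\}$. It is $2$-locally-differing if for every $\sigma\in X(k)$ and $i\ne j$ there exist two distinct vertices $x_1\ne x_2$ of $\sigma$ with $L^\sigma_i(x_t)\neq L^\sigma_j(x_t)$ for $t=1,2$. *)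

From mathcomp Require Import all_boot all_fingroup.
Set Implicit Arguments. Unset Strict Implicit. Unset Printing Implicit Defensive.

Definition simplicial_complex (V : finType) (X : {set {set V}}) : Prop :=
  forall s t : {set V}, s \in X -> t \subset s -> t \in X.

Definition faces (V : finType) (X : {set {set V}}) (k : nat) : {set {set V}} :=
  [set s in X | #|s| == k.+1].

(* A k-dimensional l-assignment: for each face sigma and i in [l], a labelling
   L sigma i : V -> bool, of which only the restriction to sigma matters. *)
Definition assignment (V : finType) (l : nat) := {set V} -> 'I_l -> V -> bool.

Definition two_locally_differing (V : finType) (X : {set {set V}}) (k l : nat)
    (L : assignment V l) : Prop :=
  forall sigma, sigma \in faces X k ->
  forall i j : 'I_l, i != j ->
  exists x1 x2 : V, [/\ x1 \in sigma, x2 \in sigma, x1 != x2,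
      L sigma i x1 != L sigma j x1 & L sigma i x2 != L sigma j x2].

From mathcomp Require Import all_boot all_fingroup.

(* If pi1 i <> pi2 i, the labellings L^sigma2_(pi1 i) and L^sigma2_(pi2 i)
   both agree with L^sigma1_i on sigma1 :&: sigma2, so they can only differ on
   sigma2 :\: sigma1, which has at most one vertex; but 2-local differing
   demands two vertices where they differ. *)

Set Implicit Arguments.
Unset Strict Implicit.
Unset Printing Implicit Defensive.

Section CodimOneFaces.

Variable V : finType.

Lemma card_faces (X : {set {set V}}) k s : s \in faces X k -> #|s| = k.+1.
Proof. by rewrite inE => /andP[_ /eqP]. Qed.

Lemma cardsD_le1_codim1 (A B : {set V}) :
  #|A| = #|B| -> #|A :&: B| = #|A| - 1 -> #|B :\: A| <= 1.
Proof.
move=> eqAB cardAB.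
by rewrite cardsD setIC cardAB -eqAB leq_subLR addnC -leq_subLR.
Qed.

Lemma disagree_in_setD (A B : {set V}) (f g h : V -> bool) x :
  {in A :&: B, h =1 f} -> {in A :&: B, h =1 g} ->
  x \in B -> f x != g x -> x \in B :\: A.
Proof.
move=> fh gh Bx; apply: contraTT; rewrite inE Bx andbT !negbK => Ax.
have ABx : x \in A :&: B by rewrite inE Ax Bx.
by rewrite -fh // -gh.
Qed.

End CodimOneFaces.

Theorem mainTheorem7 (V : finType) (X : {set {set V}}) (k l : nat)
    (L : assignment V l) (sigma1 sigma2 : {set V}) :
  simplicial_complex X ->
  two_locally_differing X k L ->
  sigma1 \in faces X k -> sigma2 \in faces X k ->
  #|sigma1 :&: sigma2| = #|sigma1| - 1 ->
  forall pi1 pi2 : {perm 'I_l},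
    (forall (i : 'I_l) (v : V), v \in sigma1 :&: sigma2 ->
        L sigma1 i v = L sigma2 (pi1 i) v) ->
    (forall (i : 'I_l) (v : V), v \in sigma1 :&: sigma2 ->
        L sigma1 i v = L sigma2 (pi2 i) v) ->
    pi1 = pi2.
Proof.
move=> _ Ldiff face1 face2 card12 pi1 pi2 agree1 agree2.
apply/permP => i; apply: contraTeq isT => neq_pi.
have [x1 [x2 [in_x1 in_x2 neq_x Lx1 Lx2]]] := Ldiff _ face2 _ _ neq_pi.
have outside x : x \in sigma2 ->
    L sigma2 (pi1 i) x != L sigma2 (pi2 i) x -> x \in sigma2 :\: sigma1.
  exact: (disagree_in_setD (agree1 i) (agree2 i)).
have small : #|sigma2 :\: sigma1| <= 1.
  by apply: cardsD_le1_codim1; rewrite // (card_faces face1) (card_faces face2).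
have := card_le1_eqP small x1 x2 (outside _ in_x1 Lx1) (outside _ in_x2 Lx2).
by move=> eq_x; rewrite eq_x eqxx in neq_x.
Qed.
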